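(* Let $L_r^n\subset\mathbb{A}^n$ be the cone over $r$ points of $\mathbb{P}^{n-1}$ in general position, and let $d\ge2$ be the integer with $\binom{n+d-2}{d-1}<r\le\binom{n+d-1}{d}$. Then \[\dim_\k T^1_{-1}\ \ge\ \max\Big\{0,\ (n-1)r-n-\Big(r-\binom{n+d-2}{d-1}\Big)\Big(\binom{n+d-1}{d}-r\Big)\Big\},\] and if $r=\binom{n+d-1}{d}$ then equality holds, i.e. $\dim_\k T^1_{-1}=(n-1)\binom{n+d-1}{d}-n$.
   Context: Ground field $\k$ algebraically closed, characteristic $0$. A set of $r$ points in $\mathbb{P}^{n-1}$ is in general position if for every $\ell\ge1$ it imposes $\min(r,\binom{n+\ell-1}{\ell})$ independent conditions on forms of degree $\ell$. $T^1=\operatorname{Coker}\big(\Theta_n\otimes\mathcal{O}\to\operatorname{Hom}_{\mathcal{O}_n}(I,\mathcal{O})\big)$ for the homogeneous ideal $I$ of $L_r^n$ (all variables of weight $1$), graded so that $T^1_\ell$ is the image of homomorphisms sending each homogeneous generator of degree $q$ to an element of degree $q+\ell$. *)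

From HB Require Import structures.
From mathcomp Require Import all_boot all_order all_algebra.
From mathcomp Require Import mpoly.
Set Implicit Arguments. Unset Strict Implicit. Unset Printing Implicit Defensive.
Import Order.TTheory GRing.Theory Num.Theory.
Local Open Scope ring_scope.

Section T1.
Variables (F : fieldType) (n r : nat) (p : 'I_r -> 'I_n -> F).
(* p i = a representative vector in F^n of the i-th point of P^{n-1}. *)

Definition distinct_points : Prop :=
  (forall i, exists k, p i k != 0) /\
  (forall i j, i != j -> ~ exists c : F, forall k, p j k = c * p i k).

(* For every l >= 1 the points impose min(r, C(n+l-1,l)) independent conditions
   on forms of degree l, i.e. the evaluation map S_l -> F^r has full rank
   min(r, dim S_l): it is onto when r <= dim S_l and one-to-one when
   dim S_l <= r. *)
Definition general_position : Prop :=
  forall l : nat, (1 <= l)%N ->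
    ((r <= 'C(n + l - 1, l))%N ->
       forall v : 'I_r -> F, exists f : {mpoly F[n]},
         f \is l.-homog /\ forall i, f.@[p i] = v i) /\
    (('C(n + l - 1, l) <= r)%N ->
       forall f : {mpoly F[n]}, f \is l.-homog ->
         (forall i, f.@[p i] = 0) -> f = 0).

Definition Iq (q : nat) (f : {mpoly F[n]}) : Prop :=
  f \is q.-homog /\ forall i, f.@[p i] = 0.

(* A homogeneous S-module homomorphism I -> O = S/I of degree -1, given by
   representatives: phi f is a representative in S_{q-1} of the image of
   f in I_q (for q = 0, I_0 = 0 and the target (S/I)_{-1} = 0). *)
Definition hom_m1 (phi : {mpoly F[n]} -> {mpoly F[n]}) : Prop :=
  (forall q f, Iq q f -> phi f \is q.-1.-homog) /\
  (forall q f g (a b : F), Iq q f -> Iq q g ->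
     Iq q.-1 (phi (a *: f + b *: g) - (a *: phi f + b *: phi g))) /\
  (forall q f (j : 'I_n), Iq q f ->
     Iq q (phi ('X_j * f) - 'X_j * phi f)).

(* equality of two such homomorphisms as maps I -> S/I *)
Definition hom_eq (phi psi : {mpoly F[n]} -> {mpoly F[n]}) : Prop :=
  forall q f, Iq q f -> Iq q.-1 (phi f - psi f).

(* the degree -1 part of Theta_n (x) O: derivations sum_j c_j d/dx_j, c_j in F *)
Definition constDer (c : 'I_n -> F) (f : {mpoly F[n]}) : {mpoly F[n]} :=
  \sum_(j < n) c j *: mderiv j f.

(* phi is zero in T^1_{-1} = Coker(Theta (x) O -> Hom(I, O))_{-1} *)
Definition zero_in_T1 (phi : {mpoly F[n]} -> {mpoly F[n]}) : Prop :=
  exists c : 'I_n -> F, hom_eq phi (constDer c).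

Definition lincomb (N : nat) (a : 'I_N -> F)
  (phi : 'I_N -> {mpoly F[n]} -> {mpoly F[n]}) (f : {mpoly F[n]}) :=
  \sum_(k < N) a k *: phi k f.

Definition T1m1_dim_ge (N : nat) : Prop :=
  exists phi : 'I_N -> {mpoly F[n]} -> {mpoly F[n]},
    (forall k, hom_m1 (phi k)) /\
    forall a : 'I_N -> F, zero_in_T1 (lincomb a phi) -> forall k, a k = 0.

Definition T1m1_dim (N : nat) : Prop := T1m1_dim_ge N /\ ~ T1m1_dim_ge N.+1.
End T1.

From HB Require Import structures.
From mathcomp Require Import all_boot all_order all_algebra.
From mathcomp Require Import mpoly.
From mathcomp Require Import ring zify.
From Stdlib Require Import ClassicalEpsilon.
Import Order.TTheory GRing.Theory Num.Theory.
Local Open Scope ring_scope.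
Set Implicit Arguments. Unset Strict Implicit. Unset Printing Implicit Defensive.

(* A homomorphism [phi : I -> S/I] of degree -1 is determined by its values at the
   points.  Near [P_i] the ideal [I] is generated by the 2x2 minors
   [P_k X_j - P_j X_k] times a form [h] of degree [d] vanishing at the other points,
   so S-linearity forces [phi f (P_i) = D_(w_i) f (P_i)] for a vector [w_i].  Thus
   T^1_{-1} is the space of matrices [(w_i)_i] whose values on [I_d] are interpolated
   by forms of degree [d - 1] (in higher degrees general position interpolates
   anything), modulo the [r + n]-dimensional space of matrices [lam_i P_i + c] coming
   from the Euler and the constant derivations.  Each of the [C(n+d-1,d) - r] forms
   spanning [I_d] imposes at most [r - C(n+d-2,d-1)] conditions, giving the lower
   bound; when [r = C(n+d-1,d)] there are no conditions at all. *)

Section DirectionalDerivative.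
Variables (F : fieldType) (n : nat).
Implicit Types (f g : {mpoly F[n]}) (w x : 'I_n -> F).

Definition dderiv w x f : F := \sum_j w j * (f^`M(j)).@[x].

Fact dderiv_is_linear w x : linear_for *%R (dderiv w x).
Proof.
move=> c f g; rewrite /dderiv mulr_sumr -big_split; apply: eq_bigr => j _ /=.
by rewrite mderivD mderivZ mevalD mevalZ mulrDr mulrCA.
Qed.
HB.instance Definition _ w x :=
  GRing.isLinear.Build F {mpoly F[n]} F *%R (dderiv w x) (dderiv_is_linear w x).

Lemma eq_dderiv w1 w2 x f : w1 =1 w2 -> dderiv w1 x f = dderiv w2 x f.
Proof. by move=> eqw; apply: eq_bigr => j _; rewrite eqw. Qed.

Lemma dderiv_dir_lin a w1 w2 x f :
  dderiv (fun j => a * w1 j + w2 j) x f = a * dderiv w1 x f + dderiv w2 x f.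
Proof.
by rewrite /dderiv mulr_sumr -big_split; apply: eq_bigr => j _; rewrite mulrDl mulrA.
Qed.

Lemma dderivM w x f g :
  dderiv w x (f * g) = dderiv w x f * g.@[x] + f.@[x] * dderiv w x g.
Proof.
rewrite /dderiv mulr_suml mulr_sumr -big_split; apply: eq_bigr => j _ /=.
by rewrite mderivM mevalD !mevalM mulrDr mulrA (mulrCA (w j)) mulrA.
Qed.

Lemma dderivC w x c : dderiv w x c%:MP = 0.
Proof. by rewrite /dderiv big1 // => j _; rewrite mderivC meval0 mulr0. Qed.

Lemma dderivX w x k : dderiv w x 'X_k = w k.
Proof.
rewrite /dderiv (bigD1 k) //= big1 => [|j njk].
  by rewrite mderivX mnm1E eqxx -{1}[U_(k)%MM]add0m addmK mpolyX0 scale1r meval1 mulr1 addr0.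
by rewrite mderivX mnm1E eq_sym (negbTE njk) scale0r meval0 mulr0.
Qed.

Lemma meval_constDer c x f : (constDer c f).@[x] = dderiv c x f.
Proof. by rewrite /constDer raddf_sum; apply: eq_bigr => j _ /=; rewrite mevalZ. Qed.

End DirectionalDerivative.

Section Homogeneous.
Variables (F : fieldType) (n : nat).
Implicit Types (f g : {mpoly F[n]}).

Lemma dhomogX1 j : ('X_j : {mpoly F[n]}) \is 1.-homog.
Proof. by rewrite dhomogX; apply/eqP; apply: mdeg1. Qed.

Lemma dhomogXl q j f : f \is q.-homog -> 'X_j * f \is q.+1.-homog.
Proof. by move=> hf; have := dhomogM (dhomogX1 j) hf; rewrite add1n. Qed.

Lemma dhomog0E f : f \is 0.-homog -> f = (f@_0)%:MP.
Proof.
move=> hf; apply/mpolyP => m; rewrite mcoeffC.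
have [->|nz_m] := eqVneq m 0%MM; first by rewrite mulr1.
by rewrite mulr0 (dhomog_nemf_coeff hf) // mdeg_eq0.
Qed.

Lemma dhomog_mderiv q j f : f \is q.-homog -> f^`M(j) \is q.-1.-homog.
Proof.
move=> /dhomogP hf; apply/dhomogP => m; rewrite mcoeff_msupp mcoeff_mderiv => nz.
have : (m + U_(j))%MM \in msupp f.
  by rewrite mcoeff_msupp; apply: contraNneq nz => ->; rewrite mul0rn.
by move/hf; rewrite /= mdegD mdeg1 addn1 => <-.
Qed.

Lemma dhomogS_sumX q f : f \is q.+1.-homog ->
  exists g : 'I_n -> {mpoly F[n]}, (forall j, g j \is q.-homog) /\ f = \sum_j 'X_j * g j.
Proof.
move=> /dhomogP hf; rewrite (mpolyE f).
elim: (msupp f) hf => [|m s IH] hs.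
  by exists (fun=> 0); split=> [j|]; rewrite ?dhomog0 // big_nil big1 // => j _; rewrite mulr0.
have [g [hg eqg]] := IH (fun m' hm' => hs m' (mem_behead (s := m :: s) hm')).
have hm : mdeg m = q.+1 by apply: hs; rewrite inE eqxx.
have [j0 hj0] : exists j, (0 < m j)%N.
  case: (pickP (fun i => 0 < m i)%N) => [j hj|m0]; first by exists j.
  move: hm; rewrite mdegE big1 // => i _.
  by move/negbT: (m0 i); rewrite -leqNgt leqn0 => /eqP.
have m_split : m = (U_(j0) + (m - U_(j0)))%MM.
  apply/mnmP => i; rewrite mnmDE mnmBE mnm1E.
  by have [<-|_] := eqVneq j0 i; [rewrite add1n subn1 prednK | rewrite subn0].
exists (fun j => g j + (j == j0)%:R *: (f@_m *: 'X_[m - U_(j0)])); split.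
  move=> j; rewrite rpredD // !rpredZ // dhomogX /=.
  by move: hm; rewrite {1}m_split mdegD mdeg1 add1n => -[->].
rewrite big_cons eqg addrC; under [RHS]eq_bigr => j _ do rewrite mulrDr.
rewrite big_split /=; congr (_ + _).
rewrite (bigD1 j0) //= big1 => [|j nj]; last by rewrite (negbTE nj) scale0r mulr0.
by rewrite eqxx scale1r addr0 -scalerAr -mpolyXD -m_split.
Qed.

Lemma euler_dderiv q x f : f \is q.-homog -> dderiv x x f = q%:R * f.@[x].
Proof.
elim: q f => [|q IH] f hf.
  by rewrite (dhomog0E hf) dderivC mul0r.
have [g [hg ->]] := dhomogS_sumX hf.
rewrite !raddf_sum mulr_sumr; apply: eq_bigr => j _ /=.
rewrite dderivM dderivX mevalM mevalXU (IH _ (hg j)) -natr1.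
by rewrite mulrDl mul1r addrC mulrCA.
Qed.

End Homogeneous.

Section MinorForms.
Variables (F : fieldType) (n : nat) (P : 'I_n -> F) (k : 'I_n).

Definition minor_form j : {mpoly F[n]} := P k *: 'X_j - P j *: 'X_k.

Lemma minor_form_homog j : minor_form j \is 1.-homog.
Proof. by rewrite rpredB // rpredZ // dhomogX1. Qed.

Lemma minor_form_eval j : (minor_form j).@[P] = 0.
Proof. by rewrite mevalB !mevalZ !mevalXU mulrC subrr. Qed.

Lemma dderiv_minor_form w x j : dderiv w x (minor_form j) = P k * w j - P j * w k.
Proof. by rewrite linearB !linearZ /= !dderivX. Qed.

Lemma minor_form_kk : minor_form k = 0.
Proof. exact: subrr. Qed.

Lemma scale_sumX_minor (g : 'I_n -> {mpoly F[n]}) :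
  P k *: (\sum_j 'X_j * g j) = 'X_k * (\sum_j P j *: g j) + \sum_j minor_form j * g j.
Proof.
rewrite mulr_sumr -big_split scaler_sumr; apply: eq_bigr => j _ /=.
rewrite /minor_form -!mul_mpolyC; ring.
Qed.

Lemma meval_sumX (g : 'I_n -> {mpoly F[n]}) :
  (\sum_j 'X_j * g j).@[P] = (\sum_j P j *: g j).@[P].
Proof. by rewrite !raddf_sum; apply: eq_bigr => j _ /=; rewrite mevalZ mevalM mevalXU. Qed.

(* The ideal of the point P is generated by the minors once P k is inverted. *)
Lemma vanishing_dhomog_minor_comb q f : f \is q.+1.-homog -> f.@[P] = 0 ->
  exists A : 'I_n -> {mpoly F[n]}, (forall j, A j \is q.-homog) /\
    P k ^+ q.+1 *: f = \sum_j minor_form j * A j.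
Proof.
elim: q f => [|q IH] f hf hP; have [g [hg eqf]] := dhomogS_sumX hf;
  have GP : (\sum_j P j *: g j).@[P] = 0 by rewrite -meval_sumX -eqf.
- exists g; split => //; rewrite expr1 eqf scale_sumX_minor.
  have hG : \sum_j P j *: g j \is 0.-homog by rewrite rpred_sum // => j _; rewrite rpredZ.
  by rewrite (dhomog0E hG) mevalC in GP; rewrite (dhomog0E hG) GP mulr0 add0r.
- have hG : \sum_j P j *: g j \is q.+1.-homog by rewrite rpred_sum // => j _; rewrite rpredZ.
  have [A' [hA' eqA']] := IH _ hG GP.
  exists (fun j => 'X_k * A' j + P k ^+ q.+1 *: g j); split.
    by move=> j; apply: dhomogD; [apply: dhomogXl | apply: dhomogZ].
  rewrite exprSr -scalerA eqf scale_sumX_minor scalerDr scalerAr eqA'.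
  rewrite scaler_sumr mulr_sumr -big_split; apply: eq_bigr => j _ /=.
  by rewrite -!mul_mpolyC; ring.
Qed.

End MinorForms.

Section VectorLemmas.
Variables (K : fieldType) (aT vT : vectType K).

Lemma dimv_lpreim (f : 'Hom(aT, vT)) (W : {vspace vT}) :
  (\dim {:aT} <= \dim (f @^-1: W) + (\dim {:vT} - \dim W))%N.
Proof.
set U := (f @^-1: W)%VS.
have kerU : (lker f <= U)%VS.
  by apply/subvP => u; rewrite memv_ker -memv_preim => /eqP ->; rewrite mem0v.
have imgU : (f @: U = W :&: limg f)%VS by rewrite /U -lpreim_cap_limg lpreimK ?capvSr.
have := limg_ker_dim f U; rewrite (capv_idPr kerU) imgU.
have := limg_ker_dim f {:aT}; rewrite capfv.
have := dimv_sum_cap W (limg f); have := dimvS (subvf (W + limg f)%VS).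
have := dimvS (capvSr W (limg f)).
lia.
Qed.

Lemma dimv_bigcap (I : Type) (s : seq I) (U : I -> {vspace vT}) :
  (\dim {:vT} <= \dim (\bigcap_(i <- s) U i) + \sum_(i <- s) (\dim {:vT} - \dim (U i)))%N.
Proof.
elim: s => [|i s IH]; first by rewrite !big_nil addn0.
rewrite !big_cons; move: IH; set V := (\bigcap_(j <- s) U j)%VS.
have := dimv_sum_cap (U i) V; have := dimvS (subvf (U i + V)%VS).
have := dimvS (subvf (U i)).
lia.
Qed.

End VectorLemmas.

Section LinearCombinations.
Variables (K : fieldType) (vT : vectType K) (N : nat) (V : 'I_N -> vT).

Definition lincomb_fun (a : 'rV[K]_N) : vT := \sum_k a 0 k *: V k.

Fact lincomb_fun_is_linear : linear lincomb_fun.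
Proof.
move=> c a b; rewrite /lincomb_fun scaler_sumr -big_split; apply: eq_bigr => k _ /=.
by rewrite !mxE scalerDl scalerA.
Qed.
HB.instance Definition _ :=
  GRing.isLinear.Build K 'rV[K]_N vT _ lincomb_fun lincomb_fun_is_linear.

Lemma exists_nontrivial_comb_in (W : {vspace vT}) : (\dim {:vT} - \dim W < N)%N ->
  exists a : 'I_N -> K, (exists k, a k != 0) /\ \sum_k a k *: V k \in W.
Proof.
move=> hN; set U := (linfun lincomb_fun @^-1: W)%VS.
have : U != 0%VS.
  rewrite -dimv_eq0 -lt0n; have := dimv_lpreim (linfun lincomb_fun) W.
  by rewrite dimvf /= dim_matrix mul1r -/U; lia.
rewrite -vpick0 => nz; have := memv_pick U; rewrite -memv_preim lfunE /=.
exists (fun k => vpick U 0 k); split => //.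
apply/existsP; apply: contraNT nz => /existsPn a0; apply/eqP/rowP => k.
by rewrite mxE; apply/eqP; move: (a0 k); rewrite negbK.
Qed.

End LinearCombinations.

Lemma exists_free_mod (K : fieldType) (vT : vectType K) (U W : {vspace vT}) (N : nat) :
  (N <= \dim U - \dim W)%N ->
  exists V : 'I_N -> vT, (forall k, V k \in U) /\
    forall a : 'I_N -> K, \sum_k a k *: V k \in W -> forall k, a k = 0.
Proof.
move=> hN; set X := vbasis (U :\: W)%VS.
have hdim : (N <= \dim (U :\: W))%N.
  apply: leq_trans hN _; rewrite -(dimv_cap_compl U W) leq_subLR leq_add2r.
  exact/dimvS/capvSr.
have XU i : (i < \dim (U :\: W))%N -> X`_i \in (U :\: W)%VS.
  by move=> hi; apply/vbasis_mem/mem_nth; rewrite size_tuple.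
exists (fun k => X`_k); split.
  by move=> k; apply: subvP (diffvSl U W) _ _; apply/XU/(leq_trans (ltn_ord k)).
move=> a aW.
pose A (i : 'I_(\dim (U :\: W))) : K := if insub (val i) is Some k then a k else 0.
have sum_widen : \sum_k a k *: X`_k = \sum_i A i *: X`_i.
  rewrite (eq_bigr (fun k : 'I_N => (if insub (val k) is Some k' then a k' else 0) *: X`_k));
    last by move=> k _; rewrite valK.
  rewrite (big_ord_widen _ (fun i => (if insub i is Some k then a k else 0) *: X`_i) hdim).
  rewrite big_mkcond /=; apply: eq_bigr => i _.
  by case: ifP => // hi; rewrite /A insubF ?hi ?scale0r.
have sumA : \sum_i A i *: X`_i = 0.
  apply/eqP; rewrite -sum_widen -memv0 -(capv_diff U W); apply/memv_capP; split => //.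
  by apply: memv_suml => k _; apply/memvZ/XU/(leq_trans (ltn_ord k)).
move=> k; have := freeP (basis_free (vbasisP (U :\: W)%VS)) A sumA (widen_ord hdim k).
by rewrite /A /= valK.
Qed.

Lemma leq_binD m a b : (a <= b)%N -> ('C(a + m, a) <= 'C(b + m, b))%N.
Proof.
have binE c : 'C(c + m, c) = 'C(c + m, m) by rewrite -{2}(addnK m c) bin_sub ?leq_addl.
by move=> ab; rewrite !binE leq_bin2l // leq_add2r.
Qed.

Lemma dim_dhomog (F : fieldType) n d : \dim {:dhomog n.+1 F d} = 'C(d + n, d).
Proof. by rewrite dimvf. Qed.

Section ConeOverPoints.
Variables (F : fieldType) (n r : nat) (p : 'I_r -> 'I_n.+1 -> F) (d : nat).
Hypotheses (hpts : distinct_points p) (hgp : general_position p) (hd : (2 <= d)%N)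
  (hr1 : ('C(d.-1 + n, d.-1) < r)%N) (hr2 : (r <= 'C(d + n, d))%N).
Local Notation mp := {mpoly F[n.+1]}.
Local Notation Iq := (Iq p).
Implicit Types (f g h : mp).

Lemma r_gt1 : (1 < r)%N.
Proof. by apply: leq_ltn_trans hr1; rewrite bin_gt0 leq_addr. Qed.

Lemma eval_dhomog_inj l f : (0 < l < d)%N -> f \is l.-homog ->
  (forall i, f.@[p i] = 0) -> f = 0.
Proof.
case/andP=> l0 ld; have [_ inj] := hgp l0; apply: inj.
rewrite addSn subn1 addnC; apply/ltnW/(leq_ltn_trans _ hr1)/leq_binD.
by rewrite -ltnS prednK // ltnW.
Qed.

Lemma interpolate l (v : 'I_r -> F) : (d <= l)%N ->
  exists g, g \is l.-homog /\ forall i, g.@[p i] = v i.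
Proof.
move=> dl; have [onto _] := hgp (leq_trans (ltnW hd) dl); apply: onto.
by rewrite addSn subn1 addnC; apply: leq_trans hr2 (leq_binD _ dl).
Qed.

Lemma Iq0 q : Iq q 0.
Proof. by split=> [|i]; rewrite ?dhomog0 ?meval0. Qed.

Lemma Iq_lin q a b f g : Iq q f -> Iq q g -> Iq q (a *: f + b *: g).
Proof.
move=> [hf vf] [hg vg]; split; first by apply: dhomogD; apply: dhomogZ.
by move=> i; rewrite mevalD !mevalZ vf vg !mulr0 addr0.
Qed.

Lemma IqMl e q g f : g \is e.-homog -> Iq q f -> Iq (e + q) (g * f).
Proof. by move=> hg [hf vf]; split=> [|i]; rewrite ?dhomogM // mevalM vf mulr0. Qed.

Lemma IqXl j q f : Iq q f -> Iq q.+1 ('X_j * f).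
Proof. by move=> [hf vf]; split=> [|i]; rewrite ?dhomogXl // mevalM vf mulr0. Qed.

Lemma Iq_eq0 q f : (q < d)%N -> Iq q f -> f = 0.
Proof.
move=> qd [hf vf]; case: q qd hf => [|q] qd hf; last exact: eval_dhomog_inj hf vf.
have i0 : 'I_r by exists 0%N; apply: ltnW r_gt1.
by have := vf i0; rewrite (dhomog0E hf) mevalC => ->.
Qed.

Section HomM1.
Variable phi : mp -> mp.
Hypothesis hphi : hom_m1 p phi.

Lemma hom_m1_0 : phi 0 = 0.
Proof.
have [hdeg _] := hphi; apply/eqP; apply: contraT => nz.
by have := dhomog_uniq nz (hdeg 1%N 0 (Iq0 1)) (hdeg 2%N 0 (Iq0 2)).
Qed.

Lemma hom_m1_eval_lin q a b f g i : Iq q f -> Iq q g ->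
  (phi (a *: f + b *: g)).@[p i] = a * (phi f).@[p i] + b * (phi g).@[p i].
Proof.
move=> hf hg; have [_ [lin _]] := hphi; move: (lin q f g a b hf hg) => [_ /(_ i)].
by rewrite mevalB mevalD !mevalZ => /eqP; rewrite subr_eq0 => /eqP.
Qed.

Lemma hom_m1_eval_sum q (I : Type) (s : seq I) (P : pred I) (G : I -> mp) i :
  (forall j, P j -> Iq q (G j)) ->
  (phi (\sum_(j <- s | P j) G j)).@[p i] = \sum_(j <- s | P j) (phi (G j)).@[p i].
Proof.
move=> hG; pose K x y := Iq q x /\ (phi x).@[p i] = y.
suff [] : K (\sum_(j <- s | P j) G j) (\sum_(j <- s | P j) (phi (G j)).@[p i]) by [].
elim/big_rec2: _ => [|j x y Pj [hx <-]]; first by split; [exact: Iq0 | rewrite hom_m1_0 meval0].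
have := Iq_lin 1 1 (hG j Pj) hx; have := hom_m1_eval_lin 1 1 i (hG j Pj) hx.
by rewrite !scale1r !mul1r.
Qed.

Lemma hom_m1_evalXl q j f i : Iq q f -> (phi ('X_j * f)).@[p i] = p i j * (phi f).@[p i].
Proof.
move=> hf; have [_ [_ mulX]] := hphi; move: (mulX q f j hf) => [_ /(_ i)].
by rewrite mevalB mevalM mevalXU => /eqP; rewrite subr_eq0 => /eqP.
Qed.

Lemma hom_m1_evalMl e q g f i : g \is e.-homog -> Iq q f ->
  (phi (g * f)).@[p i] = g.@[p i] * (phi f).@[p i].
Proof.
elim: e g => [|e IH] g hg hf.
  rewrite [in phi _](dhomog0E hg) [in g.@[_]](dhomog0E hg) mul_mpolyC mevalC.
  by have := hom_m1_eval_lin g@_0 0 i hf hf; rewrite scale0r addr0 mul0r addr0.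
have [G [hG ->]] := dhomogS_sumX hg.
rewrite mulr_suml (hom_m1_eval_sum (q := (e + q).+1)); last first.
  by move=> j _; rewrite -mulrA; apply/IqXl/IqMl.
rewrite raddf_sum mulr_suml; apply: eq_bigr => j _ /=.
by rewrite -mulrA (hom_m1_evalXl _ _ (IqMl (hG j) hf)) (IH _ (hG j) hf) mevalM mevalXU mulrA.
Qed.

End HomM1.

Lemma point_nonzero i : exists k, p i k != 0.
Proof. exact: hpts.1. Qed.

Lemma exists_bump i : exists h, h \is d.-homog /\ forall m, h.@[p m] = (m == i)%:R.
Proof. exact: interpolate. Qed.

Lemma Iq_minor_bump i k j h : h \is d.-homog -> (forall m, h.@[p m] = (m == i)%:R) ->
  Iq d.+1 (minor_form (p i) k j * h).
Proof.
move=> hh vh; split; first by have := dhomogM (minor_form_homog (p i) k j) hh; rewrite add1n.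
move=> m; rewrite mevalM vh.
by have [->|_] := eqVneq m i; rewrite ?minor_form_eval ?mul0r ?mulr0.
Qed.

Lemma dderiv_vanishing_Iq i (u : 'I_n.+1 -> F) :
  (forall q f, Iq q f -> dderiv u (p i) f = 0) -> exists lam, forall j, u j = lam * p i j.
Proof.
move=> uI; have [k pk] := point_nonzero i; have [h [hh vh]] := exists_bump i.
exists (u k / p i k) => j; have := uI _ _ (Iq_minor_bump k j hh vh).
rewrite dderivM dderiv_minor_form vh eqxx minor_form_eval mul0r addr0 mulr1.
move/eqP; rewrite subr_eq0 => /eqP e.
by apply: (mulfI pk); rewrite e; field.
Qed.

(* A hom of degree -1 acts at each point as a derivation: I is generated near [p i]
   by the minors times a bump [h], and [phi] is S-linear. *)
Lemma hom_m1_local phi i : hom_m1 p phi ->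
  exists w, forall q f, Iq q f -> (phi f).@[p i] = dderiv w (p i) f.
Proof.
move=> hphi; have [k pk] := point_nonzero i; have [h [hh vh]] := exists_bump i.
set P := p i.
pose w j := (phi (minor_form P k j * h)).@[P] / P k.
have wk : w k = 0 by rewrite /w minor_form_kk mul0r hom_m1_0 // meval0 mul0r.
exists w => -[|q] f hf.
  by rewrite (Iq_eq0 _ hf) ?hom_m1_0 ?meval0 ?linear0 // ltnW.
have [A [hA eqA]] := vanishing_dhomog_minor_comb k hf.1 (hf.2 i).
have lhs : P k ^+ q.+1 * (phi f).@[P] = \sum_j (A j).@[P] * (phi (minor_form P k j * h)).@[P].
  have e1 : (P k ^+ q.+1 *: h) * f = \sum_j A j * (minor_form P k j * h).
    by rewrite -scalerAl scalerAr eqA mulr_sumr; apply: eq_bigr => j _; ring.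
  have := hom_m1_evalMl hphi i (dhomogZ (P k ^+ q.+1) hh) hf.
  rewrite e1 (hom_m1_eval_sum hphi (q := (q + d.+1)%N)); last first.
    by move=> j _; apply: IqMl (hA j) (Iq_minor_bump k j hh vh).
  rewrite mevalZ vh eqxx mulr1 => <-; apply: eq_bigr => j _.
  by rewrite (hom_m1_evalMl hphi i (hA j) (Iq_minor_bump k j hh vh)).
have rhs : P k ^+ q.+1 * dderiv w P f = \sum_j (A j).@[P] * (P k * w j).
  rewrite -linearZ /= eqA raddf_sum; apply: eq_bigr => j _ /=.
  by rewrite dderivM dderiv_minor_form minor_form_eval wk mulr0 subr0 mul0r addr0 mulrC.
apply: (mulfI (expf_neq0 q.+1 pk)); rewrite lhs rhs; apply: eq_bigr => j _.
by rewrite /w [P k * _]mulrC divfK.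
Qed.

Definition mx_dderiv (v : 'M[F]_(r, n.+1)) i f := dderiv (v i) (p i) f.

Lemma hom_m1_mx phi : hom_m1 p phi ->
  exists v, forall q f, Iq q f -> forall i, (phi f).@[p i] = mx_dderiv v i f.
Proof.
move=> hphi; have [w hw] := fin_all_exists (fun i => hom_m1_local i hphi).
exists (\matrix_(i, j) w i j) => q f hf i.
by rewrite (hw i q f hf); apply: eq_dderiv => j; rewrite mxE.
Qed.

Lemma mx_dderiv_lin v i a b f g :
  mx_dderiv v i (a *: f + b *: g) = a * mx_dderiv v i f + b * mx_dderiv v i g.
Proof. by rewrite /mx_dderiv linearD !linearZ. Qed.

Lemma mx_dderivXl v i j f : f.@[p i] = 0 -> mx_dderiv v i ('X_j * f) = p i j * mx_dderiv v i f.
Proof. by move=> fi; rewrite /mx_dderiv dderivM dderivX fi mulr0 add0r mevalXU. Qed.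

Definition admissible (v : 'M[F]_(r, n.+1)) := forall f, Iq d f ->
  exists g, g \is d.-1.-homog /\ forall i, g.@[p i] = mx_dderiv v i f.

Definition interpolates_mx v f g := forall q, Iq q f ->
  g \is q.-1.-homog /\ forall i, g.@[p i] = mx_dderiv v i f.

(* Off [I] the value of [hom_of_mx v f] is an arbitrary choice. *)
Definition hom_of_mx v f : mp := epsilon (inhabits 0) (interpolates_mx v f).

(* Above degree d the required values are interpolated by general position. *)
Lemma hom_of_mxP v q f : admissible v -> Iq q f ->
  hom_of_mx v f \is q.-1.-homog /\ forall i, (hom_of_mx v f).@[p i] = mx_dderiv v i f.
Proof.
move=> adm hf; suff [g gP] : exists g, interpolates_mx v f g.
  exact: (epsilon_spec (inhabits 0) (interpolates_mx v f) (ex_intro _ g gP) q hf).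
have [->|nz] := eqVneq f 0.
  by exists 0 => q' _; split=> [|i]; rewrite ?dhomog0 // meval0 /mx_dderiv linear0.
have [g [hg vg]] : exists g, g \is q.-1.-homog /\ forall i, g.@[p i] = mx_dderiv v i f.
  have : (d <= q)%N by rewrite leqNgt; apply: contra nz => qd; rewrite (Iq_eq0 qd hf).
  rewrite leq_eqVlt => /orP[/eqP dq|dq]; first by rewrite -dq in hf *; apply: adm.
  by apply: interpolate; rewrite -ltnS prednK // (leq_ltn_trans _ dq).
by exists g => q' hq'; rewrite (dhomog_uniq nz hq'.1 hf.1).
Qed.

Lemma hom_of_mx0 v : admissible v -> hom_of_mx v 0 = 0.
Proof.
move=> adm; apply/eqP/contraT => nz.
by have := dhomog_uniq nz (hom_of_mxP adm (Iq0 1)).1 (hom_of_mxP adm (Iq0 2)).1.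
Qed.

Lemma hom_of_mx_hom v : admissible v -> hom_m1 p (hom_of_mx v).
Proof.
move=> adm; split; [|split].
- by move=> q f hf; case: (hom_of_mxP adm hf).
- move=> q f g a b hf hg; have [s1 v1] := hom_of_mxP adm (Iq_lin a b hf hg).
  have [s2 v2] := hom_of_mxP adm hf; have [s3 v3] := hom_of_mxP adm hg.
  split; first by rewrite rpredB // rpredD // rpredZ.
  by move=> i; rewrite mevalB mevalD !mevalZ v1 v2 v3 mx_dderiv_lin subrr.
- move=> [|q] f j hf.
    by rewrite (Iq_eq0 (ltnW hd) hf) mulr0 hom_of_mx0 // mulr0 subrr; exact: Iq0.
  have [s1 v1] := hom_of_mxP adm (IqXl j hf); have [s2 v2] := hom_of_mxP adm hf.
  split; first by rewrite rpredB // dhomogXl.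
  by move=> i; rewrite mevalB mevalM mevalXU v1 v2 mx_dderivXl ?subrr //; case: hf.
Qed.

Definition triv_mx (x : 'rV[F]_r * 'rV[F]_n.+1) : 'M[F]_(r, n.+1) :=
  \matrix_(i, j) (x.1 0 i * p i j + x.2 0 j).

Fact triv_mx_is_linear : linear triv_mx.
Proof. by move=> a x y; apply/matrixP => i j; rewrite !mxE /=; ring. Qed.
HB.instance Definition _ := GRing.isLinear.Build F ('rV[F]_r * 'rV[F]_n.+1)%type
  'M[F]_(r, n.+1) _ triv_mx triv_mx_is_linear.

Definition triv_space := limg (linfun triv_mx).

Lemma triv_spaceP M : M \in triv_space <->
  exists lam c, forall i j, M i j = lam i * p i j + c j.
Proof.
split=> [/memv_imgP[x _ ->]|[lam [c eqM]]].
  by exists (fun i => x.1 0 i), (fun j => x.2 0 j) => i j; rewrite lfunE /= mxE.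
apply/memv_imgP; exists (\row_i lam i, \row_j c j); rewrite ?memvf //.
by apply/matrixP => i j; rewrite lfunE /= !mxE eqM.
Qed.

Lemma triv_coef_eq0 (lam : 'I_r -> F) (c : 'I_n.+1 -> F) :
  (forall i j, lam i * p i j + c j = 0) -> (forall i, lam i = 0) /\ (forall j, c j = 0).
Proof.
move=> eq0; pose i0 : 'I_r := Ordinal (ltnW r_gt1); pose i1 : 'I_r := Ordinal r_gt1.
have lam0 : lam i0 = 0.
  have [//|nz] := eqVneq (lam i0) 0; exfalso; apply: (hpts.2 i1 i0) => //.
  exists (lam i1 / lam i0) => j; apply: (mulfI nz).
  by rewrite mulrA mulrCA mulfV // mulr1; apply: (addIr (c j)); rewrite !eq0.
have c0 j : c j = 0 by have := eq0 i0 j; rewrite lam0 mul0r add0r.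
split=> // i; have [k pk] := point_nonzero i.
by have /eqP := eq0 i k; rewrite c0 addr0 mulf_eq0 (negbTE pk) orbF => /eqP.
Qed.

Lemma dim_triv_space : \dim triv_space = (r + n.+1)%N.
Proof.
have dim_pair : \dim {:('rV[F]_r * 'rV[F]_n.+1)%type} = (r + n.+1)%N.
  rewrite dimvf; change (dim 'rV[F]_r + dim 'rV[F]_n.+1 = r + n.+1)%N.
  by rewrite !dim_matrix !mul1r.
have := limg_ker_dim (linfun triv_mx) fullv; rewrite capfv dim_pair => <-.
suff -> : lker (linfun triv_mx) = 0%VS by rewrite dimv0.
apply/vspaceP => -[a b]; rewrite memv_ker memv0 lfunE /=.
apply/eqP/eqP => [/matrixP eq0|->]; last exact: linear0.
have [a0 b0] : (forall i, a 0 i = 0) /\ (forall j, b 0 j = 0).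
  by apply: triv_coef_eq0 => i j; have := eq0 i j; rewrite !mxE.
by congr pair; apply/rowP => k; rewrite mxE ?a0 ?b0.
Qed.

Definition ev_fun q (x : dhomog n.+1 F q) : 'rV[F]_r := \row_i (val x).@[p i].

Fact ev_fun_is_linear q : linear (@ev_fun q).
Proof. by move=> a x y; apply/rowP => i; rewrite !mxE /= mevalD mevalZ. Qed.
HB.instance Definition _ q := GRing.isLinear.Build F (dhomog n.+1 F q) 'rV[F]_r _
  (@ev_fun q) (@ev_fun_is_linear q).

Definition ev q : 'Hom(dhomog n.+1 F q, 'rV[F]_r) := linfun (@ev_fun q).

Lemma dim_limg_ev_pred : \dim (limg (ev d.-1)) = 'C(d.-1 + n, d.-1).
Proof.
have := limg_ker_dim (ev d.-1) fullv; rewrite capfv dim_dhomog => <-.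
suff -> : lker (ev d.-1) = 0%VS by rewrite dimv0.
apply/eqP; rewrite -subv0; apply/subvP => x; rewrite memv_ker memv0 lfunE /= => /eqP/rowP x0.
have d1 : (0 < d.-1 < d)%N by apply/andP; split; lia.
apply/eqP/val_inj/(eval_dhomog_inj d1 (dhomog_is_dhomog x)) => i.
by have := x0 i; rewrite !mxE.
Qed.

Lemma dim_lker_ev : \dim (lker (ev d)) = ('C(d + n, d) - r)%N.
Proof.
have := limg_ker_dim (ev d) fullv; rewrite capfv dim_dhomog => <-.
suff -> : limg (ev d) = fullv by rewrite dimvf /= dim_matrix mul1r addnK.
apply/eqP; rewrite eqEsubv subvf /=; apply/subvP => y _.
have [g [hg vg]] := interpolate (fun i => y 0 i) (leqnn d).
apply/memv_imgP; exists (DHomog hg); first exact: memvf.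
by rewrite lfunE /=; apply/rowP => i; rewrite !mxE vg.
Qed.

Definition dderiv_pts_fun f (v : 'M[F]_(r, n.+1)) : 'rV[F]_r := \row_i mx_dderiv v i f.

Fact dderiv_pts_fun_is_linear f : linear (dderiv_pts_fun f).
Proof.
move=> a v w; apply/rowP => i; rewrite !mxE /mx_dderiv -dderiv_dir_lin.
by apply: eq_dderiv => j; rewrite !mxE.
Qed.
HB.instance Definition _ f := GRing.isLinear.Build F 'M[F]_(r, n.+1) 'rV[F]_r _
  (dderiv_pts_fun f) (dderiv_pts_fun_is_linear f).

Lemma dderiv_pts_fun_sum (I : Type) (s : seq I) (P : pred I) (c : I -> F) (g : I -> mp) v :
  dderiv_pts_fun (\sum_(t <- s | P t) c t *: g t) v =
  \sum_(t <- s | P t) c t *: dderiv_pts_fun (g t) v.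
Proof.
apply/rowP => i; rewrite !mxE summxE /mx_dderiv linear_sum; apply: eq_bigr => t _.
by rewrite linearZ !mxE.
Qed.

Definition dderiv_pts f : 'Hom('M[F]_(r, n.+1), 'rV[F]_r) := linfun (dderiv_pts_fun f).

Lemma mx_dderiv_lincomb N (a : 'I_N -> F) (V : 'I_N -> 'M[F]_(r, n.+1)) i f :
  mx_dderiv (\sum_k a k *: V k) i f = \sum_k a k * mx_dderiv (V k) i f.
Proof.
have := congr1 (fun y : 'rV[F]_r => y 0 i)
  (linear_sum (dderiv_pts_fun f) (index_enum _) xpredT (fun k => a k *: V k)).
by rewrite /= !mxE summxE => ->; apply: eq_bigr => k _; rewrite linearZ !mxE.
Qed.

(* [I_d] is spanned by the basis of [lker (ev d)], so only these forms constrain [v]. *)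
Definition adm_space : {vspace 'M[F]_(r, n.+1)} :=
  (\bigcap_(t < \dim (lker (ev d)))
     dderiv_pts (val (vbasis (lker (ev d)))`_t) @^-1: limg (ev d.-1))%VS.

Lemma adm_space_admissible v : v \in adm_space -> admissible v.
Proof.
move=> hv f [hf vf]; set K := lker (ev d); set X := vbasis K.
have fK : DHomog hf \in K.
  by rewrite memv_ker lfunE /=; apply/eqP/rowP => i; rewrite !mxE /= vf.
have : dderiv_pts f v \in limg (ev d.-1).
  have -> : f = val (DHomog hf) by [].
  rewrite (coord_vbasis fK) raddf_sum /= lfunE /=.
  rewrite dderiv_pts_fun_sum; apply: memv_suml => t _; rewrite memvZ // -lfunE memv_preim.
  exact: subvP (bigcapv_inf t isT (subvv _)) _ hv.
case/memv_imgP=> y _ vy; exists (val y); split; first exact: dhomog_is_dhomog.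
by move=> i; have := congr1 (fun M : 'rV[F]_r => M 0 i) vy; rewrite !lfunE /= !mxE.
Qed.

Lemma dim_adm_space :
  (r * n.+1 <= \dim adm_space + ('C(d + n, d) - r) * (r - 'C(d.-1 + n, d.-1)))%N.
Proof.
have := dimv_bigcap (index_enum 'I_(\dim (lker (ev d))))
  (fun t => dderiv_pts (val (vbasis (lker (ev d)))`_t) @^-1: limg (ev d.-1))%VS.
rewrite dimvf /= dim_matrix -/adm_space => /leq_trans; apply; rewrite leq_add2l.
rewrite -dim_lker_ev -[X in (X * _)%N]card_ord -sum_nat_const leq_sum // => t _.
have := dimv_lpreim (dderiv_pts (val (vbasis (lker (ev d)))`_t)) (limg (ev d.-1)).
by rewrite !dimvf /= !dim_matrix mul1r dim_limg_ev_pred; lia.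
Qed.

Lemma eval_lincomb N (a : 'I_N -> F) (phi : 'I_N -> mp -> mp) V f i :
  (forall k, (phi k f).@[p i] = mx_dderiv (V k) i f) ->
  (lincomb a phi f).@[p i] = mx_dderiv (\sum_k a k *: V k) i f.
Proof.
move=> phiV; rewrite mx_dderiv_lincomb raddf_sum; apply: eq_bigr => k _ /=.
by rewrite mevalZ phiV.
Qed.

(* Rows [lam_i p_i + c] act as the Euler derivation, which vanishes on [I] at the points,
   plus [constDer c]. *)
Lemma triv_hom_eq psi M lam c :
  (forall q f, Iq q f -> psi f \is q.-1.-homog) ->
  (forall q f, Iq q f -> forall i, (psi f).@[p i] = mx_dderiv M i f) ->
  (forall i j, M i j = lam i * p i j + c j) -> hom_eq p psi (constDer c).
Proof.
move=> psi_homog psiM eqM q f hf; split.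
  rewrite rpredB ?psi_homog // rpred_sum // => j _.
  by rewrite dhomogZ // (dhomog_mderiv _ hf.1).
move=> i; rewrite mevalB meval_constDer (psiM _ _ hf) /mx_dderiv (eq_dderiv _ _ (eqM i)).
by rewrite dderiv_dir_lin (euler_dderiv _ hf.1) hf.2 !mulr0 add0r subrr.
Qed.

Lemma hom_eq_triv psi M c :
  (forall q f, Iq q f -> forall i, (psi f).@[p i] = mx_dderiv M i f) ->
  hom_eq p psi (constDer c) -> M \in triv_space.
Proof.
move=> psiM eq_psi; apply/triv_spaceP.
have row i : exists l, forall j, M i j - c j = l * p i j.
  apply: dderiv_vanishing_Iq => q f hf.
  have [_ /(_ i)] := eq_psi q f hf.
  rewrite mevalB meval_constDer (psiM _ _ hf) => <-.
  rewrite /mx_dderiv addrC -mulN1r -dderiv_dir_lin.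
  by apply: eq_dderiv => j; rewrite addrC mulN1r.
have [lam hlam] := fin_all_exists row.
by exists lam, c => i j; rewrite -hlam subrK.
Qed.

Lemma T1m1_dim_ge_lower :
  T1m1_dim_ge p (r * n.+1 - ('C(d + n, d) - r) * (r - 'C(d.-1 + n, d.-1)) - (r + n.+1)).
Proof.
set N := (_ - _ - _)%N.
have [|V [V_adm V_free]] := @exists_free_mod _ _ adm_space triv_space N.
  by have := dim_adm_space; rewrite dim_triv_space /N; lia.
have adm k := adm_space_admissible (V_adm k).
exists (fun k => hom_of_mx (V k)); split=> [k|a [c eq_c]]; first exact: hom_of_mx_hom.
apply: V_free; apply: hom_eq_triv eq_c => q f hf i.
by apply: eval_lincomb => k; case: (hom_of_mxP (adm k) hf).
Qed.

Lemma T1m1_dim_lt_upper : ~ T1m1_dim_ge p (r * n.+1 - (r + n.+1)).+1.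
Proof.
move=> [phi [hphi phi_free]]; have [V hV] := fin_all_exists (fun k => hom_m1_mx (hphi k)).
have [|a [[k ak] aV]] := @exists_nontrivial_comb_in _ _ _ V triv_space.
  by rewrite dimvf /= dim_matrix dim_triv_space.
have [lam [c eqM]] := (triv_spaceP _).1 aV.
apply: (negP ak); apply/eqP; apply: (phi_free a _ k); exists c; apply: triv_hom_eq eqM.
- move=> q f hf; rewrite rpred_sum // => t _; rewrite dhomogZ //.
  by case: (hphi t) => /(_ q f hf).
- by move=> q f hf i; apply: eval_lincomb => t; exact: hV t q f hf i.
Qed.

Lemma n_gt0 : (0 < n)%N.
Proof.
rewrite lt0n; apply/eqP => n0; move: hr1 hr2; rewrite n0 !addn0 !binn.
by move=> /leq_trans h /h.
Qed.

End ConeOverPoints.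

Lemma T1_bound_natE (r N c1 c2 : nat) : (c1 < r)%N -> (r <= c2)%N ->
  absz (Num.max 0%Z ((N%:Z - 1) * r%:Z - N%:Z - (r%:Z - c1%:Z) * (c2%:Z - r%:Z)))
  = (r * N - (c2 - r) * (r - c1) - (r + N))%N.
Proof.
move=> c1r rc2.
have -> : (N%:Z - 1) * r%:Z - N%:Z - (r%:Z - c1%:Z) * (c2%:Z - r%:Z) =
    (r * N)%N%:Z - ((c2 - r) * (r - c1))%N%:Z - (r + N)%N%:Z.
  by rewrite !PoszM -!subzn ?(ltnW c1r) // PoszD; ring.
move: (r * N)%N ((c2 - r) * (r - c1))%N => a b.
case: (leqP (r + N) (a - b)) => h.
  by rewrite max_r; lia.
by rewrite max_l; lia.
Qed.

Lemma T1_dim_natE (r N : nat) : (1 < N)%N -> (1 < r)%N ->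
  ((r * N - (r + N))%N)%:Z = (N%:Z - 1) * r%:Z - N%:Z.
Proof.
move=> N1 r1; have le : (r + N <= r * N)%N by have := leq_mul r1 N1; nia.
by rewrite -subzn // PoszM PoszD; ring.
Qed.

Theorem mainTheorem8 (F : closedFieldType) (hchar : [pchar F] =i pred0)
  (n r : nat) (p : 'I_r -> 'I_n -> F) (d : nat)
  (hpts : distinct_points p) (hgp : general_position p)
  (hd : (2 <= d)%N)
  (hr1 : ('C(n + d - 2, d - 1) < r)%N) (hr2 : (r <= 'C(n + d - 1, d))%N) :
  T1m1_dim_ge p
    (absz (Num.max 0%Z ((n%:Z - 1) * r%:Z - n%:Z
        - (r%:Z - ('C(n + d - 2, d - 1))%:Z) * (('C(n + d - 1, d))%:Z - r%:Z))))
  /\ (r = 'C(n + d - 1, d) ->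
      exists N : nat, T1m1_dim p N /\
        N%:Z = (n%:Z - 1) * ('C(n + d - 1, d))%:Z - n%:Z).
Proof.
case: n p hpts hgp hr1 hr2 => [|n] p hpts hgp hr1 hr2.
  move: hr2; rewrite add0n bin_small ?subn1 ?prednK //; last exact: ltnW.
  by rewrite leqn0 => /eqP r0; rewrite r0 in hr1.
have eC1 : 'C(n.+1 + d - 2, d - 1) = 'C(d.-1 + n, d.-1) by congr binomial; lia.
have eC2 : 'C(n.+1 + d - 1, d) = 'C(d + n, d) by congr binomial; lia.
rewrite eC1 eC2 in hr1 hr2 *; have lower := T1m1_dim_ge_lower hpts hgp hd hr1 hr2.
split; first by rewrite T1_bound_natE.
move=> rC; exists (r * n.+1 - (r + n.+1))%N; split.
  split; last exact: T1m1_dim_lt_upper hpts hgp hd hr1 hr2.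
  by move: lower; rewrite -rC subnn mul0n subn0.
by rewrite -rC T1_dim_natE ?ltnS ?(n_gt0 hr1 hr2) ?(r_gt1 hr1).
Qed.
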